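(* Let $\lambda_1>0$ and let $\chi:[0,\infty)\to[0,\infty)$ be smooth with $\chi(s)=1$ for $s\in[0,\lambda_1/2)$ and $\chi(s)=0$ for $s>\lambda_1$. For $m\ge2$ and $\lambda\ge0$ set $P_m(\lambda)=2m(\sqrt{\lambda+m^2}-m)+\chi(\lambda)$ and $P_\infty(\lambda)=\lambda+\chi(\lambda)$. Then for every positive integer $k$ there is $C_k>0$ such that for all $m\ge2$ and $\lambda>0$: (1) $\Big|\big(\tfrac{d}{d\lambda}\big)^k\big(\tfrac{P_m(\lambda)}{P_\infty(\lambda)}\big)\Big|\le\dfrac{C_k}{\lambda^k}$; (2) $\Big|\big(\tfrac{d}{d\lambda}\big)^k\big(\tfrac1{P_\infty(\lambda)}-\tfrac1{P_m(\lambda)}\big)\Big|\le\dfrac{C_k}{\lambda^k}\min\Big\{\dfrac1{m^2},\dfrac1{m(\lambda+1)^{1/2}}\Big\}$.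
   Context: In the paper $\lambda_1$ is the smallest Dirichlet eigenvalue of $-\Delta$ on a smooth bounded domain $\Omega\subset\mathbb{R}^n$, $n\ge3$. *)

From Stdlib Require Import Reals.
Open Scope R_scope.

Definition derivs_on (D : R -> Prop) (f : R -> R) (F : nat -> R -> R) : Prop :=
  (forall x, D x -> F 0%nat x = f x) /\
  (forall (n : nat) (x : R), D x -> derivable_pt_lim (F n) x (F (S n) x)).

Definition smooth_on (D : R -> Prop) (f : R -> R) : Prop :=
  exists F, derivs_on D f F.

Definition pos_reals (x : R) : Prop := 0 < x.

Definition P_m (chi : R -> R) (m lam : R) : R :=
  2 * m * (sqrt (lam + m ^ 2) - m) + chi lam.

Definition P_inf (chi : R -> R) (lam : R) : R := lam + chi lam.

From Stdlib Require Import Reals Lra Lia.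
From Coquelicot Require Import Coquelicot.
Open Scope R_scope.

(* Call a family f(m, l) a symbol of weight w if |d^j f/dl^j| <= C_j w / l^j for
   every j, uniformly in m >= 2.  Symbols are closed under sums, products,
   inverses (of functions dominating their weight) and square roots, with the
   weights combining accordingly.  The cutoff chi is a symbol of weight 1, since
   its derivatives live on [lambda1/2, lambda1].  Writing
   g = sqrt(l + m^2) - m = l / (sqrt(l + m^2) + m), P_m = 2 m g + chi is a symbol
   of weight m l / sqrt(l + m^2) + 1, which it dominates, and P_inf one of weight
   l + 1; hence P_m / P_inf has weight 1.  Since l = g (g + 2m), we get
   1/P_inf - 1/P_m = - g^2 / (P_inf P_m), whose weight is at most
   1 / (m sqrt(l + m^2)) <= min(1/m^2, 1/(m sqrt(l + 1))). *)

Section Symbols.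

Variable M : R -> Prop.

Definition dominated (w f : R -> R -> R) : Prop :=
  exists C, 0 <= C /\ forall m l, M m -> 0 < l -> Rabs (f m l) <= C * w m l.

Fixpoint symbol (n : nat) (w f : R -> R -> R) : Prop :=
  dominated w f /\
  match n with
  | O => True
  | S n => exists f' : R -> R -> R,
      (forall m l, M m -> 0 < l -> is_derive (f m) l (f' m l)) /\
      symbol n (fun m l => w m l / l) f'
  end.

Lemma dominated_weaken w w' f c : 0 <= c ->
  (forall m l, M m -> 0 < l -> w m l <= c * w' m l) -> dominated w f -> dominated w' f.
Proof.
  intros Hc Hw [C [HC Hf]]. exists (C * c); split; [nra|].
  intros m l Hm Hl. eapply Rle_trans; [apply Hf; auto|].
  rewrite Rmult_assoc. apply Rmult_le_compat_l; auto.
Qed.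

Lemma dominated_ext w f g : (forall m l, M m -> 0 < l -> f m l = g m l) ->
  dominated w f -> dominated w g.
Proof.
  intros He [C [HC Hf]]. exists C; split; [exact HC|].
  intros m l Hm Hl. rewrite <- He; auto.
Qed.

Lemma dominated_plus w f g : dominated w f -> dominated w g ->
  dominated w (fun m l => f m l + g m l).
Proof.
  intros [C1 [HC1 Hf]] [C2 [HC2 Hg]]. exists (C1 + C2); split; [lra|].
  intros m l Hm Hl. specialize (Hf m l Hm Hl); specialize (Hg m l Hm Hl).
  eapply Rle_trans; [apply Rabs_triang|]. lra.
Qed.

Lemma dominated_scal w f c : dominated w f -> dominated w (fun m l => c * f m l).
Proof.
  intros [C [HC Hf]]. exists (Rabs c * C); split.
  - apply Rmult_le_pos; [apply Rabs_pos|exact HC].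
  - intros m l Hm Hl. rewrite Rabs_mult, Rmult_assoc.
    apply Rmult_le_compat_l; [apply Rabs_pos|auto].
Qed.

Lemma dominated_mult w1 w2 f g : dominated w1 f -> dominated w2 g ->
  dominated (fun m l => w1 m l * w2 m l) (fun m l => f m l * g m l).
Proof.
  intros [C1 [HC1 Hf]] [C2 [HC2 Hg]]. exists (C1 * C2); split; [nra|].
  intros m l Hm Hl. rewrite Rabs_mult.
  replace (C1 * C2 * (w1 m l * w2 m l)) with ((C1 * w1 m l) * (C2 * w2 m l)) by ring.
  apply Rmult_le_compat; auto using Rabs_pos.
Qed.

Lemma dominated_inv w f c : 0 < c ->
  (forall m l, M m -> 0 < l -> 0 < w m l /\ w m l <= c * f m l) ->
  dominated (fun m l => / w m l) (fun m l => / f m l).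
Proof.
  intros Hc Hw. exists c; split; [lra|]. intros m l Hm Hl.
  destruct (Hw m l Hm Hl) as [Hw0 Hwf].
  assert (Hf : 0 < f m l) by nra.
  rewrite Rabs_pos_eq by (left; apply Rinv_0_lt_compat; exact Hf).
  replace (/ f m l) with (c * / (c * f m l)) by (field; lra).
  apply Rmult_le_compat_l; [lra|]. apply Rinv_le_contravar; auto.
Qed.

Lemma dominated_sqrt w u :
  (forall m l, M m -> 0 < l -> 0 < w m l) ->
  dominated (fun m l => w m l * w m l) u -> dominated w (fun m l => sqrt (u m l)).
Proof.
  intros Hw [C [HC Hu]]. exists (sqrt C); split; [apply sqrt_pos|].
  intros m l Hm Hl. specialize (Hw m l Hm Hl); specialize (Hu m l Hm Hl).
  rewrite Rabs_pos_eq by apply sqrt_pos.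
  rewrite <- (sqrt_square (w m l)), <- sqrt_mult_alt by lra.
  apply sqrt_le_1_alt. eapply Rle_trans; [apply Rle_abs|]. lra.
Qed.

Lemma symbol_dominated n w f : symbol n w f -> dominated w f.
Proof. destruct n; intros [H _]; exact H. Qed.

Lemma symbol_pred n : forall w f, symbol (S n) w f -> symbol n w f.
Proof.
  induction n as [|n IH]; intros w f [Hd [f' [Hf' Hs]]]; split; auto.
  exists f'; split; auto.
Qed.

Lemma symbol_weaken n : forall w w' f c, 0 <= c ->
  (forall m l, M m -> 0 < l -> w m l <= c * w' m l) -> symbol n w f -> symbol n w' f.
Proof.
  induction n as [|n IH]; intros w w' f c Hc Hw [Hd Hr];
    (split; [exact (dominated_weaken _ _ _ _ Hc Hw Hd)|]).
  - exact I.
  - destruct Hr as [f' [Hf' Hs]]. exists f'; split; [exact Hf'|].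
    refine (IH _ _ _ c Hc _ Hs).
    intros m l Hm Hl. unfold Rdiv. rewrite <- Rmult_assoc.
    apply Rmult_le_compat_r; [left; apply Rinv_0_lt_compat|]; auto.
Qed.

Lemma symbol_ext n : forall w f g, (forall m l, M m -> 0 < l -> f m l = g m l) ->
  symbol n w f -> symbol n w g.
Proof.
  induction n as [|n IH]; intros w f g He [Hd Hr];
    (split; [exact (dominated_ext _ _ _ He Hd)|]).
  - exact I.
  - destruct Hr as [f' [Hf' Hs]]. exists f'; split; [|exact Hs].
    intros m l Hm Hl. apply (is_derive_ext_loc (f m)); [|auto].
    apply (filter_imp (fun t => 0 < t)); [|exact (open_gt 0 l Hl)].
    intros t Ht. apply He; auto.
Qed.

Lemma symbol_plus n : forall w f g, symbol n w f -> symbol n w g ->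
  symbol n w (fun m l => f m l + g m l).
Proof.
  induction n as [|n IH]; intros w f g [Hdf Hf] [Hdg Hg];
    (split; [exact (dominated_plus _ _ _ Hdf Hdg)|]).
  - exact I.
  - destruct Hf as [f' [Hf' Hsf]], Hg as [g' [Hg' Hsg]].
    exists (fun m l => f' m l + g' m l); split; [|apply IH; auto].
    intros m l Hm Hl. apply (is_derive_plus (f m) (g m)); auto.
Qed.

Lemma symbol_scal n : forall w f c, symbol n w f -> symbol n w (fun m l => c * f m l).
Proof.
  induction n as [|n IH]; intros w f c [Hd Hr];
    (split; [exact (dominated_scal _ _ c Hd)|]).
  - exact I.
  - destruct Hr as [f' [Hf' Hs]].
    exists (fun m l => c * f' m l); split; [|apply IH; auto].
    intros m l Hm Hl. apply is_derive_scal; auto.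
Qed.

Lemma symbol_const n : forall w g, dominated w (fun m _ => g m) -> symbol n w (fun m _ => g m).
Proof.
  induction n as [|n IH]; intros w g Hd; (split; [exact Hd|]).
  - exact I.
  - exists (fun _ _ => 0); split.
    + intros m l Hm Hl. apply (is_derive_const (g m)).
    + apply (IH _ (fun _ => 0)). exists 0; split; [lra|].
      intros m l Hm Hl. rewrite Rabs_R0. lra.
Qed.

Lemma symbol_id n : symbol n (fun _ l => l) (fun _ l => l).
Proof.
  assert (Hd : dominated (fun _ l => l) (fun _ l => l)).
  { exists 1; split; [lra|]. intros m l Hm Hl. rewrite Rabs_pos_eq; lra. }
  destruct n as [|n]; (split; [exact Hd|]).
  - exact I.
  - exists (fun _ _ => 1); split.
    + intros m l Hm Hl. apply (is_derive_id l).
    + apply (symbol_const n _ (fun _ => 1)). exists 1; split; [lra|].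
      intros m l Hm Hl. rewrite Rabs_R1. unfold Rdiv. rewrite Rinv_r; lra.
Qed.

Lemma symbol_mult n : forall w1 w2 f g, symbol n w1 f -> symbol n w2 g ->
  symbol n (fun m l => w1 m l * w2 m l) (fun m l => f m l * g m l).
Proof.
  induction n as [|n IH]; intros w1 w2 f g H1 H2;
    (split; [exact (dominated_mult _ _ _ _ (symbol_dominated _ _ _ H1)
                                          (symbol_dominated _ _ _ H2))|]).
  - exact I.
  - pose proof (symbol_pred _ _ _ H1) as H1'. pose proof (symbol_pred _ _ _ H2) as H2'.
    destruct H1 as [_ [f' [Hf' Hs1]]], H2 as [_ [g' [Hg' Hs2]]].
    exists (fun m l => f' m l * g m l + f m l * g' m l); split.
    + intros m l Hm Hl. apply (is_derive_mult (f m) (g m)); auto.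
      intros; apply Rmult_comm.
    + apply symbol_plus.
      * apply (symbol_weaken n (fun m l => w1 m l / l * w2 m l) _ _ 1); [lra| |auto].
        intros m l Hm Hl. right. field. lra.
      * apply (symbol_weaken n (fun m l => w1 m l * (w2 m l / l)) _ _ 1); [lra| |auto].
        intros m l Hm Hl. right. field. lra.
Qed.

Lemma symbol_inv n : forall w f c, 0 < c ->
  (forall m l, M m -> 0 < l -> 0 < w m l /\ w m l <= c * f m l) -> symbol n w f ->
  symbol n (fun m l => / w m l) (fun m l => / f m l).
Proof.
  induction n as [|n IH]; intros w f c Hc Hw Hs;
    (split; [exact (dominated_inv _ _ _ Hc Hw)|]).
  - exact I.
  - pose proof (symbol_pred _ _ _ Hs) as Hs'.
    destruct Hs as [_ [f' [Hf' Hs1]]].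
    exists (fun m l => -1 * (f' m l * (/ f m l * / f m l))); split.
    + intros m l Hm Hl. destruct (Hw m l Hm Hl) as [Hw0 Hwf].
      assert (Hf : 0 < f m l) by nra.
      replace (-1 * (f' m l * (/ f m l * / f m l))) with (- f' m l / f m l ^ 2)
        by (field; lra).
      apply is_derive_inv; [auto|lra].
    + apply (symbol_weaken n (fun m l => w m l / l * (/ w m l * / w m l)) _ _ 1); [lra| |].
      * intros m l Hm Hl. destruct (Hw m l Hm Hl) as [Hw0 _]. right. field. lra.
      * apply symbol_scal, symbol_mult; [exact Hs1|].
        apply symbol_mult; eapply IH; eauto.
Qed.

Lemma symbol_sqrt n : forall w u c, 0 < c ->
  (forall m l, M m -> 0 < l -> 0 < w m l /\ w m l * w m l <= c * u m l) ->
  symbol n (fun m l => w m l * w m l) u -> symbol n w (fun m l => sqrt (u m l)).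
Proof.
  induction n as [|n IH]; intros w u c Hc Hw Hs;
    (split; [apply dominated_sqrt; [intros m l Hm Hl; apply Hw; auto
                                    |exact (symbol_dominated _ _ _ Hs)]|]).
  - exact I.
  - pose proof (symbol_pred _ _ _ Hs) as Hs'.
    destruct Hs as [_ [u' [Hu' Hs1]]].
    exists (fun m l => / 2 * (u' m l * / sqrt (u m l))); split.
    + intros m l Hm Hl. destruct (Hw m l Hm Hl) as [Hw0 Hwu].
      assert (Hu : 0 < u m l) by nra.
      assert (0 < sqrt (u m l)) by (apply sqrt_lt_R0; exact Hu).
      replace (/ 2 * (u' m l * / sqrt (u m l))) with (u' m l / (2 * sqrt (u m l)))
        by (field; lra).
      apply is_derive_sqrt; auto.
    + apply (symbol_weaken n (fun m l => w m l * w m l / l * / w m l) _ _ 1); [lra| |].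
      * intros m l Hm Hl. destruct (Hw m l Hm Hl) as [Hw0 _]. right. field. lra.
      * apply symbol_scal, symbol_mult; [exact Hs1|].
        apply (symbol_inv n w _ (sqrt c)); [apply sqrt_lt_R0; exact Hc| |eapply IH; eauto].
        intros m l Hm Hl. destruct (Hw m l Hm Hl) as [Hw0 Hwu]. split; [exact Hw0|].
        rewrite <- (sqrt_square (w m l)), <- sqrt_mult_alt by lra.
        apply sqrt_le_1_alt. lra.
Qed.

Lemma derivs_on_shift f f' F :
  derivs_on pos_reals f F -> (forall l, 0 < l -> is_derive f l (f' l)) ->
  derivs_on pos_reals f' (fun j => F (S j)).
Proof.
  intros [HF0 HF] Hf'. split; [|intros j x Hx; apply HF; exact Hx].
  intros x Hx. rewrite <- (is_derive_unique _ _ _ (Hf' x Hx)).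
  symmetry. apply is_derive_unique.
  apply (is_derive_ext_loc (F 0%nat)); [|apply is_derive_Reals, HF, Hx].
  apply (filter_imp (fun t => 0 < t)); [|exact (open_gt 0 x Hx)].
  intros t Ht. apply HF0. exact Ht.
Qed.

Lemma symbol_derivs_bound n : forall w f, symbol n w f -> exists C, 0 <= C /\
  forall m, M m -> forall F, derivs_on pos_reals (f m) F ->
  forall l, 0 < l -> Rabs (F n l) <= C * w m l / l ^ n.
Proof.
  induction n as [|n IH]; intros w f Hs.
  - destruct Hs as [[C [HC Hb]] _]. exists C; split; [exact HC|].
    intros m Hm F [HF0 _] l Hl. rewrite HF0 by exact Hl. simpl. rewrite Rdiv_1_r. auto.
  - destruct Hs as [_ [f' [Hf' Hs]]]. destruct (IH _ _ Hs) as [C [HC Hb]].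
    exists C; split; [exact HC|]. intros m Hm F HF l Hl.
    pose proof (derivs_on_shift _ (f' m) _ HF (fun l Hl => Hf' m l Hm Hl)) as HF'.
    eapply Rle_trans; [exact (Hb m Hm _ HF' l Hl)|]. right. simpl.
    field. split; [apply pow_nonzero|]; lra.
Qed.

Lemma symbol_Derive_n j : forall n w f, symbol (j + n) w f -> exists w' g,
  (forall m l, M m -> 0 < l -> Derive_n (f m) j l = g m l) /\ symbol n w' g.
Proof.
  induction j as [|j IH]; intros n w f Hs.
  - exists w, f; split; auto.
  - replace (S j + n)%nat with (j + S n)%nat in Hs by lia.
    destruct (IH _ _ _ Hs) as [w' [g [Hg [_ [g' [Hg' Hs']]]]]].
    exists (fun m l => w' m l / l), g'; split; [|exact Hs'].
    intros m l Hm Hl. simpl. apply is_derive_unique.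
    apply (is_derive_ext_loc (g m)); [|apply Hg'; auto].
    apply (filter_imp (fun t => 0 < t)); [|exact (open_gt 0 l Hl)].
    intros t Ht. symmetry. apply Hg; auto.
Qed.

Lemma symbol_smooth w f : (forall n, symbol n w f) -> forall m, M m -> smooth_on pos_reals (f m).
Proof.
  intros Hs m Hm. exists (Derive_n (f m)). split; [reflexivity|].
  intros n x Hx.
  destruct (symbol_Derive_n n 1 w f (Hs _)) as [w' [g [Hg [_ [g' [Hg' _]]]]]].
  assert (Hloc : locally x (fun t => g m t = Derive_n (f m) n t)).
  { apply (filter_imp (fun t => 0 < t)); [|exact (open_gt 0 x Hx)].
    intros t Ht. symmetry. apply Hg; auto. }
  assert (Hd : is_derive (Derive_n (f m) n) x (g' m x)).
  { apply (is_derive_ext_loc (g m)); [exact Hloc|apply Hg'; auto]. }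
  replace (Derive_n (f m) (S n) x) with (g' m x) by (symmetry; exact (is_derive_unique _ _ _ Hd)).
  apply is_derive_Reals. exact Hd.
Qed.

Lemma symbol_of_derivs n : forall j (F : nat -> R -> R),
  (forall i x, 0 < x -> is_derive (F i) x (F (S i) x)) ->
  (forall i, exists C, 0 <= C /\ forall l, 0 < l -> Rabs (F i l) <= C / l ^ i) ->
  symbol n (fun _ l => / l ^ j) (fun _ l => F j l).
Proof.
  assert (Hd : forall j (F : nat -> R -> R),
    (forall i, exists C, 0 <= C /\ forall l, 0 < l -> Rabs (F i l) <= C / l ^ i) ->
    dominated (fun _ l => / l ^ j) (fun _ l => F j l)).
  { intros j F HF. destruct (HF j) as [C [HC Hb]]. exists C; split; [exact HC|].
    intros m l _ Hl. apply Hb, Hl. }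
  induction n as [|n IH]; intros j F HF HB; (split; [exact (Hd j F HB)|]).
  - exact I.
  - exists (fun _ l => F (S j) l); split; [intros m l _ Hl; apply HF, Hl|].
    apply (symbol_weaken n (fun _ l => / l ^ S j) _ _ 1); [lra| |apply IH; auto].
    intros m l Hm Hl. right. simpl. field. split; [apply pow_nonzero|]; lra.
Qed.

End Symbols.

Lemma derivable_pt_lim_locally_const (g : R -> R) (c x d : R) :
  locally x (fun t => g t = c) -> derivable_pt_lim g x d -> d = 0.
Proof.
  intros Hloc Hd. apply is_derive_Reals in Hd.
  apply (is_derive_ext_loc g (fun _ => c)) in Hd; [|exact Hloc].
  rewrite <- (is_derive_unique _ _ _ Hd). apply Derive_const.
Qed.

Lemma derivs_on_locally_const (D U : R -> Prop) f F c :
  derivs_on D f F -> (forall x, U x -> D x /\ locally x U) ->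
  (forall x, U x -> f x = c) -> forall i x, U x -> F (S i) x = 0.
Proof.
  intros [HF0 HF] HU Hc. induction i as [|i IH]; intros x Hx; destruct (HU x Hx) as [HDx HUx].
  - apply (derivable_pt_lim_locally_const (F 0%nat) c x); [|apply HF, HDx].
    apply (filter_imp U); [|exact HUx].
    intros t Ht. rewrite HF0 by (apply HU, Ht). apply Hc, Ht.
  - apply (derivable_pt_lim_locally_const (F (S i)) 0 x); [|apply HF, HDx].
    apply (filter_imp U); [|exact HUx]. exact IH.
Qed.

Lemma bounded_of_continuous_on_segment (g : R -> R) a b K : a <= b ->
  (forall x, a <= x <= b -> continuity_pt g x) ->
  (forall x, 0 < x -> x < a \/ b < x -> Rabs (g x) <= K) ->
  exists B, 0 <= B /\ forall x, 0 < x -> Rabs (g x) <= B.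
Proof.
  intros Hab Hg HK.
  destruct (continuity_ab_maj (fun x => Rabs (g x)) a b Hab) as [xmax [Hmax _]].
  { intros x Hx. apply (continuity_pt_comp g Rabs); [apply Hg, Hx|apply Rcontinuity_abs]. }
  exists (Rmax (Rabs (g xmax)) K). split.
  { eapply Rle_trans; [apply Rabs_pos|apply Rmax_l]. }
  intros x Hx. destruct (Rlt_le_dec x a) as [Hxa|Hxa]; [|destruct (Rle_lt_dec x b) as [Hxb|Hxb]].
  - eapply Rle_trans; [apply HK; auto|apply Rmax_r].
  - eapply Rle_trans; [apply Hmax; lra|apply Rmax_l].
  - eapply Rle_trans; [apply HK; auto|apply Rmax_r].
Qed.

Lemma decay_of_bounded_vanishing (g : R -> R) B b i : 0 < b ->
  (forall x, 0 < x -> Rabs (g x) <= B) -> (forall x, b < x -> g x = 0) ->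
  forall x, 0 < x -> Rabs (g x) <= B * b ^ i / x ^ i.
Proof.
  intros Hb HB Hg x Hx. assert (Hxi : 0 < x ^ i) by (apply pow_lt, Hx).
  assert (HB0 : 0 <= B) by (eapply Rle_trans; [apply Rabs_pos|apply (HB x Hx)]).
  destruct (Rle_lt_dec x b) as [Hxb|Hxb].
  - apply (Rmult_le_reg_r (x ^ i) _ _ Hxi).
    replace (B * b ^ i / x ^ i * x ^ i) with (B * b ^ i) by (field; lra).
    apply Rmult_le_compat; [apply Rabs_pos|apply pow_le; lra|apply HB, Hx|apply pow_incr; lra].
  - rewrite Hg, Rabs_R0 by exact Hxb.
    apply Rdiv_le_0_compat; [apply Rmult_le_pos; [exact HB0|apply pow_le; lra]|exact Hxi].
Qed.

Section Cutoff.

Variables (lambda1 : R) (chi : R -> R) (F : nat -> R -> R).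
Hypothesis Hl1 : 0 < lambda1.
Hypothesis HF : derivs_on pos_reals chi F.
Hypothesis Hchi_one : forall s, 0 <= s < lambda1 / 2 -> chi s = 1.
Hypothesis Hchi_zero : forall s, lambda1 < s -> chi s = 0.

Lemma cutoff_derivs_left i x : 0 < x < lambda1 / 2 -> F (S i) x = 0.
Proof.
  apply (derivs_on_locally_const pos_reals (fun t => 0 < t < lambda1 / 2) chi F 1 HF).
  - intros t Ht. split; [unfold pos_reals; lra|].
    apply filter_and; [apply (open_gt 0)|apply (open_lt (lambda1 / 2))]; lra.
  - intros t Ht. apply Hchi_one. lra.
Qed.

Lemma cutoff_derivs_right i x : lambda1 < x -> F i x = 0.
Proof.
  intros Hx. destruct i as [|i].
  - rewrite (proj1 HF) by (unfold pos_reals; lra). apply Hchi_zero, Hx.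
  - apply (derivs_on_locally_const pos_reals (fun t => lambda1 < t) chi F 0 HF); [| |exact Hx].
    + intros t Ht. split; [unfold pos_reals; lra|apply (open_gt lambda1), Ht].
    + exact Hchi_zero.
Qed.

Lemma cutoff_derivs_decay i :
  exists C, 0 <= C /\ forall l, 0 < l -> Rabs (F i l) <= C / l ^ i.
Proof.
  destruct (bounded_of_continuous_on_segment (F i) (lambda1 / 2) lambda1 1)
    as [B [HB Hbound]]; [lra| | |].
  - intros x Hx. apply derivable_continuous_pt. exists (F (S i) x).
    apply (proj2 HF). unfold pos_reals. lra.
  - intros x Hx [Hxa|Hxb].
    + destruct i as [|i].
      * rewrite (proj1 HF), Hchi_one, Rabs_R1 by (unfold pos_reals; lra). lra.
      * rewrite cutoff_derivs_left, Rabs_R0 by lra. lra.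
    + rewrite cutoff_derivs_right, Rabs_R0 by exact Hxb. lra.
  - exists (B * lambda1 ^ i). split; [apply Rmult_le_pos; [exact HB|apply pow_le; lra]|].
    apply decay_of_bounded_vanishing; [exact Hl1|exact Hbound|apply cutoff_derivs_right].
Qed.

Lemma cutoff_symbol (M : R -> Prop) n : symbol M n (fun _ _ => 1) (fun _ l => chi l).
Proof.
  apply (symbol_ext M n _ (fun _ l => F 0%nat l)).
  { intros m l _ Hl. apply (proj1 HF), Hl. }
  apply (symbol_weaken M n (fun _ l => / l ^ 0) _ _ 1); [lra| |].
  - intros; simpl; lra.
  - apply symbol_of_derivs; [|exact cutoff_derivs_decay].
    intros i x Hx. apply is_derive_Reals, (proj2 HF), Hx.
Qed.

End Cutoff.

Definition radical (m l : R) : R := sqrt (l + m ^ 2).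

Definition gap (m l : R) : R := l / (radical m l + m).

Lemma radical_bounds m l : 2 <= m -> 0 < l ->
  m <= radical m l /\ sqrt (l + 1) <= radical m l /\ radical m l * radical m l = l + m ^ 2.
Proof.
  intros Hm Hl. unfold radical. split; [|split].
  - rewrite <- (sqrt_square m) at 1 by lra. apply sqrt_le_1_alt. simpl. nra.
  - apply sqrt_le_1_alt. simpl. nra.
  - apply sqrt_sqrt. simpl. nra.
Qed.

Lemma radical_sub_eq_gap m l : 2 <= m -> 0 < l -> radical m l - m = gap m l.
Proof.
  intros Hm Hl. destruct (radical_bounds m l Hm Hl) as [Hr [_ Hr2]]. unfold gap.
  field_simplify_eq; [simpl in Hr2; nra|lra].
Qed.

Lemma gap_eq m l : 2 <= m -> 0 < l -> l = gap m l * (gap m l + 2 * m).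
Proof.
  intros Hm Hl. rewrite <- radical_sub_eq_gap by auto.
  destruct (radical_bounds m l Hm Hl) as [_ [_ Hr2]]. simpl in Hr2. nra.
Qed.

Lemma radical_symbol n : symbol (Rle 2) n radical radical.
Proof.
  apply (symbol_sqrt _ n radical (fun m l => l + m ^ 2) 1); [lra| |].
  - intros m l Hm Hl. destruct (radical_bounds m l Hm Hl) as [Hr [_ Hr2]]. split; lra.
  - apply (symbol_weaken _ n (fun m l => l + m ^ 2) _ _ 1); [lra| |].
    + intros m l Hm Hl. destruct (radical_bounds m l Hm Hl) as [_ [_ Hr2]]. lra.
    + apply (symbol_plus _ n _ (fun _ l => l) (fun m _ => m ^ 2)).
      * apply (symbol_weaken _ n (fun _ l => l) _ _ 1); [lra| |apply symbol_id].
        intros m l Hm Hl. simpl. nra.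
      * apply symbol_const. exists 1; split; [lra|]. intros m l Hm Hl.
        rewrite Rabs_pos_eq by (simpl; nra). lra.
Qed.

Lemma gap_symbol n : symbol (Rle 2) n (fun m l => l / radical m l) gap.
Proof.
  apply (symbol_mult _ n (fun _ l => l) _ (fun _ l => l)); [apply symbol_id|].
  apply (symbol_inv _ n radical _ 1); [lra| |].
  - intros m l Hm Hl. destruct (radical_bounds m l Hm Hl) as [Hr _]. split; lra.
  - apply (symbol_plus _ n _ radical (fun m _ => m)); [apply radical_symbol|].
    apply symbol_const. exists 1; split; [lra|]. intros m l Hm Hl.
    destruct (radical_bounds m l Hm Hl) as [Hr _]. rewrite Rabs_pos_eq; lra.
Qed.

Definition Pm_weight (m l : R) : R := m * (l / radical m l) + 1.

Lemma inv_difference_eq l c m g : 0 < l + c -> 0 < 2 * m * g + c -> l = g * (g + 2 * m) ->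
  / (l + c) - / (2 * m * g + c) = -1 * (g * g * (/ (l + c) * / (2 * m * g + c))).
Proof. intros H1 H2 ->. field. lra. Qed.

Lemma difference_weight_le_min m l : 2 <= m -> 0 < l ->
  l / radical m l * (l / radical m l) * (/ (l + 1) * / Pm_weight m l)
  <= Rmin (/ m ^ 2) (/ (m * sqrt (l + 1))).
Proof.
  intros Hm Hl. destruct (radical_bounds m l Hm Hl) as [Hr [Hr1 Hr2]].
  unfold Pm_weight. set (r := radical m l) in *.
  assert (Hs : 0 < sqrt (l + 1)) by (apply sqrt_lt_R0; lra).
  (* the weight is [l^2 / (r (l+1) (m l + r))], and [m l^2 <= (l+1) (m l + r)] *)
  assert (Hw : l / r * (l / r) * (/ (l + 1) * / (m * (l / r) + 1)) <= / (m * r)).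
  { assert (E : / (m * r) - l / r * (l / r) * (/ (l + 1) * / (m * (l / r) + 1))
               = (m * l + r * (l + 1)) / (m * r * (l + 1) * (m * l + r)))
      by (field; repeat split; nra).
    assert (0 <= (m * l + r * (l + 1)) / (m * r * (l + 1) * (m * l + r))).
    { apply Rdiv_le_0_compat; [nra|]. repeat apply Rmult_lt_0_compat; nra. }
    lra. }
  apply Rmin_glb; eapply Rle_trans; try exact Hw; apply Rinv_le_contravar; simpl; nra.
Qed.

Section Multiplier.

Variables (lambda1 : R) (chi : R -> R) (F : nat -> R -> R).
Hypothesis Hl1 : 0 < lambda1.
Hypothesis HF : derivs_on pos_reals chi F.
Hypothesis Hchi_nonneg : forall s, 0 <= s -> 0 <= chi s.
Hypothesis Hchi_one : forall s, 0 <= s < lambda1 / 2 -> chi s = 1.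
Hypothesis Hchi_zero : forall s, lambda1 < s -> chi s = 0.

Let chi_symbol n : symbol (Rle 2) n (fun _ _ => 1) (fun _ l => chi l) :=
  cutoff_symbol lambda1 chi F Hl1 HF Hchi_one Hchi_zero (Rle 2) n.

Lemma one_le_of_ge_half l : lambda1 / 2 <= l -> 1 <= 2 / lambda1 * l.
Proof.
  intros Hl. replace (2 / lambda1 * l) with (1 + (2 * l - lambda1) / lambda1) by (field; lra).
  assert (0 <= (2 * l - lambda1) / lambda1) by (apply Rdiv_le_0_compat; lra). lra.
Qed.

Lemma Pm_eq m l : 2 <= m -> 0 < l -> P_m chi m l = 2 * m * gap m l + chi l.
Proof. intros Hm Hl. unfold P_m. fold (radical m l). rewrite radical_sub_eq_gap; auto. Qed.

Lemma Pm_symbol n : symbol (Rle 2) n Pm_weight (P_m chi).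
Proof.
  apply (symbol_ext _ n _ (fun m l => 2 * (m * gap m l) + chi l)).
  { intros m l Hm Hl. rewrite Pm_eq by auto. ring. }
  assert (Ha : forall m l, 2 <= m -> 0 < l -> 0 <= m * (l / radical m l)).
  { intros m l Hm Hl. destruct (radical_bounds m l Hm Hl) as [Hr _].
    apply Rmult_le_pos; [lra|apply Rdiv_le_0_compat; lra]. }
  apply symbol_plus.
  - apply (symbol_weaken _ n (fun m l => m * (l / radical m l)) _ _ 2); [lra| |].
    + intros m l Hm Hl. unfold Pm_weight. pose proof (Ha m l Hm Hl). lra.
    + apply symbol_scal, (symbol_mult _ n (fun m _ => m) _ (fun m _ => m)); [|apply gap_symbol].
      apply symbol_const. exists 1; split; [lra|]. intros m l Hm Hl. rewrite Rabs_pos_eq; lra.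
  - apply (symbol_weaken _ n (fun _ _ => 1) _ _ 1); [lra| |apply chi_symbol].
    + intros m l Hm Hl. unfold Pm_weight. pose proof (Ha m l Hm Hl). lra.
Qed.

Lemma Pm_dominates_weight m l : 2 <= m -> 0 < l ->
  0 < Pm_weight m l /\ Pm_weight m l <= (2 + 2 / lambda1) * P_m chi m l.
Proof.
  intros Hm Hl. rewrite Pm_eq by auto.
  destruct (radical_bounds m l Hm Hl) as [Hr [Hr1 Hr2]].
  unfold Pm_weight, gap. set (r := radical m l) in *.
  assert (HL : 0 < 2 / lambda1) by (apply Rdiv_lt_0_compat; lra).
  assert (Ha : 0 <= m * (l / r)) by (apply Rmult_le_pos; [lra|apply Rdiv_le_0_compat; lra]).
  assert (Hag : m * (l / r) <= 2 * m * (l / (r + m))).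
  { unfold Rdiv. replace (2 * m * (l * / (r + m))) with (m * l * (2 * / (r + m))) by ring.
    rewrite <- Rmult_assoc. apply Rmult_le_compat_l; [nra|].
    replace (2 * / (r + m)) with (/ ((r + m) / 2)) by (field; lra).
    apply Rinv_le_contravar; lra. }
  split; [lra|].
  destruct (Rlt_le_dec l (lambda1 / 2)) as [Hsmall|Hlarge].
  - rewrite Hchi_one by lra. nra.
  - pose proof (Hchi_nonneg l ltac:(lra)) as Hc.
    (* away from the plateau of [chi], [1 <= K * (m l / r)]: the [+ 1] of the weight
       is absorbed by its first term *)
    set (K := 1 + 2 / lambda1).
    assert (HrK : r <= K * m * l).
    { pose proof (one_le_of_ge_half l Hlarge) as HKl.
      rewrite <- (sqrt_square (K * m * l)) by (unfold K; nra).
      unfold r, radical. apply sqrt_le_1_alt. unfold K. simpl.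
      replace ((1 + 2 / lambda1) * m * l * ((1 + 2 / lambda1) * m * l)) with
        ((m * m) * ((l + 2 / lambda1 * l) * (l + 2 / lambda1 * l))) by ring.
      set (p := l + 2 / lambda1 * l).
      assert (Hp : l + 1 <= p * p) by (unfold p; nra).
      rewrite Rmult_1_r.
      assert (Hm2 : 1 <= m * m) by nra.
      assert (0 <= (m * m) * (p * p - (l + 1))) by (apply Rmult_le_pos; lra).
      nra. }
    assert (HKa : 1 <= K * (m * (l / r))).
    { replace (K * (m * (l / r))) with ((K * m * l) / r) by (field; lra).
      apply (Rmult_le_reg_r r); [lra|]. unfold Rdiv. rewrite Rmult_assoc, Rinv_l; lra. }
    unfold K in HKa. nra.
Qed.

Lemma Pinf_symbol n : symbol (Rle 2) n (fun _ l => l + 1) (fun _ l => P_inf chi l).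
Proof.
  apply (symbol_plus _ n _ (fun _ l => l) (fun _ l => chi l)).
  - apply (symbol_weaken _ n (fun _ l => l) _ _ 1); [lra| |apply symbol_id]. intros; lra.
  - apply (symbol_weaken _ n (fun _ _ => 1) _ _ 1); [lra| |apply chi_symbol].
    intros; lra.
Qed.

Lemma Pinf_dominates_weight l : 0 < l -> 0 < l + 1 /\ l + 1 <= (1 + 2 / lambda1) * P_inf chi l.
Proof.
  intros Hl. unfold P_inf. split; [lra|].
  assert (HL : 0 < 2 / lambda1) by (apply Rdiv_lt_0_compat; lra).
  destruct (Rlt_le_dec l (lambda1 / 2)) as [Hsmall|Hlarge].
  - rewrite Hchi_one by lra. nra.
  - pose proof (Hchi_nonneg l ltac:(lra)). pose proof (one_le_of_ge_half l Hlarge). nra.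
Qed.

Lemma inv_Pm_symbol n : symbol (Rle 2) n (fun m l => / Pm_weight m l) (fun m l => / P_m chi m l).
Proof.
  apply (symbol_inv _ n Pm_weight _ (2 + 2 / lambda1));
    [|exact Pm_dominates_weight|apply Pm_symbol].
  assert (0 < 2 / lambda1) by (apply Rdiv_lt_0_compat; lra). lra.
Qed.

Lemma inv_Pinf_symbol n : symbol (Rle 2) n (fun _ l => / (l + 1)) (fun _ l => / P_inf chi l).
Proof.
  apply (symbol_inv _ n (fun _ l => l + 1) _ (1 + 2 / lambda1));
    [|intros m l _; apply Pinf_dominates_weight|apply Pinf_symbol].
  assert (0 < 2 / lambda1) by (apply Rdiv_lt_0_compat; lra). lra.
Qed.

Lemma ratio_symbol n : symbol (Rle 2) n (fun _ _ => 1) (fun m l => P_m chi m l / P_inf chi l).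
Proof.
  apply (symbol_weaken _ n (fun m l => Pm_weight m l * / (l + 1)) _ _ 1); [lra| |].
  - intros m l Hm Hl. destruct (radical_bounds m l Hm Hl) as [Hr _].
    assert (Hw : Pm_weight m l <= l + 1).
    { unfold Pm_weight.
      replace (m * (l / radical m l)) with (l * (m / radical m l)) by (field; lra).
      assert (m / radical m l <= 1).
      { unfold Rdiv. rewrite <- (Rinv_r (radical m l)) by lra.
        apply Rmult_le_compat_r; [left; apply Rinv_0_lt_compat|]; lra. }
      nra. }
    apply (Rmult_le_reg_r (l + 1)); [lra|]. rewrite Rmult_assoc, Rinv_l; lra.
  - apply (symbol_mult _ n Pm_weight (fun _ l => / (l + 1)) (P_m chi) (fun _ l => / P_inf chi l));
      [apply Pm_symbol|apply inv_Pinf_symbol].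
Qed.

Lemma difference_symbol n : symbol (Rle 2) n (fun m l => Rmin (/ m ^ 2) (/ (m * sqrt (l + 1))))
  (fun m l => / P_inf chi l - / P_m chi m l).
Proof.
  apply (symbol_ext _ n _ (fun m l => -1 * (gap m l * gap m l * (/ P_inf chi l * / P_m chi m l)))).
  { intros m l Hm Hl. rewrite Pm_eq by auto. unfold P_inf.
    destruct (Pm_dominates_weight m l Hm Hl) as [Hw HP]. rewrite Pm_eq in HP by auto.
    destruct (Pinf_dominates_weight l Hl) as [_ HPi]. unfold P_inf in HPi.
    assert (0 < 2 / lambda1) by (apply Rdiv_lt_0_compat; lra).
    symmetry. apply inv_difference_eq; [nra|nra|apply gap_eq; auto]. }
  apply (symbol_weaken _ n
    (fun m l => l / radical m l * (l / radical m l) * (/ (l + 1) * / Pm_weight m l)) _ _ 1);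
    [lra|intros m l Hm Hl; rewrite Rmult_1_l; apply difference_weight_le_min; auto|].
  apply symbol_scal, symbol_mult; [apply symbol_mult; apply gap_symbol|].
  apply symbol_mult; [apply inv_Pinf_symbol|apply inv_Pm_symbol].
Qed.

End Multiplier.

Theorem propositionA2 (lambda1 : R) (chi : R -> R)
  (Hl1 : 0 < lambda1)
  (Hchi_smooth : smooth_on pos_reals chi)
  (Hchi_nonneg : forall s, 0 <= s -> 0 <= chi s)
  (Hchi_one : forall s, 0 <= s < lambda1 / 2 -> chi s = 1)
  (Hchi_zero : forall s, lambda1 < s -> chi s = 0) :
  forall k : nat, (1 <= k)%nat ->
  exists Ck : R, 0 < Ck /\
    forall m : R, 2 <= m ->
      (* (1) *)
      smooth_on pos_reals (fun lam => P_m chi m lam / P_inf chi lam) /\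
      (forall F, derivs_on pos_reals (fun lam => P_m chi m lam / P_inf chi lam) F ->
         forall lam, 0 < lam -> Rabs (F k lam) <= Ck / lam ^ k) /\
      (* (2) *)
      smooth_on pos_reals (fun lam => / P_inf chi lam - / P_m chi m lam) /\
      (forall F, derivs_on pos_reals (fun lam => / P_inf chi lam - / P_m chi m lam) F ->
         forall lam, 0 < lam ->
           Rabs (F k lam) <=
             Ck / lam ^ k * Rmin (/ m ^ 2) (/ (m * sqrt (lam + 1)))).
Proof.
  intros k _. destruct Hchi_smooth as [F HF].
  pose proof (ratio_symbol lambda1 chi F Hl1 HF Hchi_nonneg Hchi_one Hchi_zero) as Hratio.
  pose proof (difference_symbol lambda1 chi F Hl1 HF Hchi_nonneg Hchi_one Hchi_zero) as Hdiff.
  destruct (symbol_derivs_bound _ k _ _ (Hratio k)) as [C1 [HC1 Hb1]].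
  destruct (symbol_derivs_bound _ k _ _ (Hdiff k)) as [C2 [HC2 Hb2]].
  exists (C1 + C2 + 1). split; [lra|]. intros m Hm.
  split; [|split; [|split]].
  - exact (symbol_smooth _ _ _ Hratio m Hm).
  - intros G HG l Hl. eapply Rle_trans; [exact (Hb1 m Hm G HG l Hl)|].
    unfold Rdiv. apply Rmult_le_compat_r; [left; apply Rinv_0_lt_compat, pow_lt|]; lra.
  - exact (symbol_smooth _ _ _ Hdiff m Hm).
  - intros G HG l Hl. eapply Rle_trans; [exact (Hb2 m Hm G HG l Hl)|].
    set (w := Rmin (/ m ^ 2) (/ (m * sqrt (l + 1)))).
    assert (0 <= w).
    { apply Rmin_glb; left; apply Rinv_0_lt_compat;
        [apply pow_lt|apply Rmult_lt_0_compat; [|apply sqrt_lt_R0]]; lra. }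
    assert (0 <= w * / l ^ k)
      by (apply Rmult_le_pos; [|left; apply Rinv_0_lt_compat, pow_lt]; lra).
    unfold Rdiv. nra.
Qed.
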